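(* Let $T$ be a tree of order at least $6$ in which the set $S'(T)$ of weak support vertices is a maximum $2$-packing. Then $T$ has no strong support vertex.
   Context: A leaf is a vertex of degree $1$; a weak support vertex is a vertex adjacent to exactly one leaf, and a strong support vertex is a vertex adjacent to at least two leaves. A $2$-packing is a set of vertices pairwise at distance at least $3$; a maximum $2$-packing is one of maximum cardinality. *)

From mathcomp Require Import all_boot.
Set Implicit Arguments. Unset Strict Implicit. Unset Printing Implicit Defensive.

Section Graphs.
Variable T : finType.
Variable e : rel T.

Definition simple_graph : Prop := symmetric e /\ irreflexive e.

Definition connected_graph : Prop := forall x y : T, connect e x y.

(* acyclic: every cycle of pairwise distinct vertices has at most 2 vertices
   (a 2-vertex "cycle" [:: a; b] is just an edge traversed back and forth) *)
Definition acyclic_graph : Prop := forall c : seq T, ucycle e c -> size c <= 2.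

Definition is_tree : Prop := simple_graph /\ connected_graph /\ acyclic_graph.

Definition nbhd (x : T) : {set T} := [set y | e x y].
Definition deg (x : T) : nat := #|nbhd x|.
Definition leaf (x : T) : bool := deg x == 1.

Definition nleaves (x : T) : nat := #|[set y | e x y & leaf y]|.
Definition weak_support (x : T) : bool := nleaves x == 1.
Definition strong_support (x : T) : bool := 2 <= nleaves x.

Definition weak_supports : {set T} := [set x | weak_support x].

(* 2-packing: distinct vertices are at distance >= 3, i.e. neither adjacent
   nor sharing a common neighbour *)
Definition two_packing (S : {set T}) : Prop :=
  forall x y, x \in S -> y \in S -> x != y ->
    ~~ e x y /\ (forall z, ~~ (e x z && e z y)).

Definition max_two_packing (S : {set T}) : Prop :=
  two_packing S /\ forall P : {set T}, two_packing P -> #|P| <= #|S|.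

End Graphs.

From mathcomp Require Import all_boot.
Set Implicit Arguments.
Unset Strict Implicit.
Unset Printing Implicit Defensive.

(* Let x be a strong support vertex with a leaf neighbour l.  Neither x nor l
   is a weak support vertex, and l, whose only neighbour is x, is at distance
   at least 3 from every vertex other than x and its neighbours.  If no weak
   support vertex is adjacent to x, adding l to S'(T) keeps a 2-packing.
   Otherwise let w be such a neighbour, with its leaf u: replacing w by l and
   u gives a 2-packing one larger than S'(T).  Either way S'(T) is not
   maximum. *)

Section WeakSupportPacking.
Variables (T : finType) (e : rel T).
Hypothesis e_sym : symmetric e.

Definition far (a b : T) : Prop := ~~ e a b /\ forall z, ~~ (e a z && e z b).

Lemma far_sym a b : far a b -> far b a.
Proof.
move=> [nab nz]; split; first by rewrite e_sym.
by move=> z; rewrite [e b z]e_sym [e z a]e_sym andbC.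
Qed.

Lemma two_packing_far (S : {set T}) a b :
  two_packing e S -> a \in S -> b \in S -> a != b -> far a b.
Proof. exact. Qed.

Lemma two_packingS (A B : {set T}) :
  A \subset B -> two_packing e B -> two_packing e A.
Proof. by move=> /subsetP sAB pB a b /sAB aB /sAB bB; apply: pB. Qed.

Lemma two_packingU1 (S : {set T}) a :
  two_packing e S -> (forall s, s \in S -> s != a -> far a s) ->
  two_packing e (a |: S).
Proof.
move=> pS farS x y; rewrite !in_setU1 => /predU1P[->|xS] /predU1P[->|yS] nxy.
- by rewrite eqxx in nxy.
- by apply: farS; rewrite // eq_sym.
- exact/far_sym/farS.
- exact: pS.
Qed.

Lemma leaf_adj_eq l a b : leaf e l -> e l a -> e l b -> a = b.
Proof.
rewrite /leaf /deg => /cards1P[v Nl] la lb.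
have: a \in nbhd e l by rewrite inE.
have: b \in nbhd e l by rewrite inE.
by rewrite Nl !inE => /eqP-> /eqP->.
Qed.

Lemma leaf_far l x s : leaf e l -> e l x -> s != x -> ~~ e x s -> far l s.
Proof.
move=> ll lx nsx nxs; split.
  by apply: contra nsx => ls; rewrite (leaf_adj_eq ll ls lx).
by move=> z; apply/negP => /andP[/(leaf_adj_eq ll)/(_ lx) ->]; apply/negP.
Qed.

Lemma leaf_adj_notin_weak_supports l x :
  leaf e l -> e l x -> ~~ leaf e x -> l \notin weak_supports e.
Proof.
move=> ll lx; apply: contra; rewrite inE /weak_support /nleaves.
move=> /cards1P[y Ly]; have: y \in [set y | e l y & leaf e y] by rewrite Ly inE.
by rewrite inE => /andP[ly ly_leaf]; rewrite -(leaf_adj_eq ll ly lx).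
Qed.

Lemma weak_support_leaf w : weak_support e w -> exists2 u, leaf e u & e w u.
Proof.
rewrite /weak_support /nleaves => /cards1P[u Lw].
have: u \in [set y | e w y & leaf e y] by rewrite Lw inE.
by rewrite inE => /andP[wu lu]; exists u.
Qed.

Lemma strong_support_leaf x : strong_support e x -> exists2 l, leaf e l & e x l.
Proof.
move=> sx; have /set0Pn[l] : [set y | e x y & leaf e y] != set0.
  by rewrite -card_gt0; apply: leq_trans sx.
by rewrite inE => /andP[xl ll]; exists l.
Qed.

Lemma strong_support_nonleaf x : strong_support e x -> ~~ leaf e x.
Proof.
move=> sx; rewrite /leaf neq_ltn; apply/orP; right.
apply: leq_trans sx _; apply/subset_leq_card/subsetP => y.
by rewrite !inE => /andP[].
Qed.

Lemma strong_support_notin_weak_supports x :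
  strong_support e x -> x \notin weak_supports e.
Proof.
by rewrite inE /weak_support /strong_support; case: nleaves => [|[]].
Qed.

Section Exchange.
Variables (W : {set T}) (x l : T).
Hypotheses (pW : two_packing e W) (xW : x \notin W).
Hypotheses (l_leaf : leaf e l) (lx : e l x).

Lemma two_packing_add_leaf :
  (forall w, w \in W -> ~~ e x w) -> two_packing e (l |: W).
Proof.
move=> noW; apply: two_packingU1 => // s sW _.
by apply: (leaf_far l_leaf lx); [apply: contraTneq sW => -> | exact: noW].
Qed.

Lemma two_packing_swap_leaves w u :
  l \notin W -> w \in W -> e x w -> leaf e u -> e u w ->
  two_packing e (u |: (l |: (W :\ w))).
Proof.
move=> lW wW xw u_leaf uw.
have far_w s : s \in W :\ w -> far w s.
  rewrite in_setD1 => /andP[nsw sW].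
  by apply: (two_packing_far pW wW sW); rewrite eq_sym.
have notin_x s : s \in W :\ w -> s != x.
  by rewrite in_setD1 => /andP[_ sW]; apply: contraTneq sW => ->.
apply: two_packingU1.
  apply: two_packingU1; first exact: two_packingS (subsetDl W [set w]) pW.
  move=> s sWw _; apply: (leaf_far l_leaf lx); first exact: notin_x.
  by have [_ /(_ x)] := far_w s sWw; rewrite e_sym xw.
move=> s; rewrite in_setU1 => /predU1P[-> _|sWw _].
  apply: (leaf_far u_leaf uw); first by apply: contraTneq wW => <-.
  by apply: contraNN xW; rewrite e_sym => /(leaf_adj_eq l_leaf lx) ->.
apply: (leaf_far u_leaf uw); last exact: (far_w s sWw).1.
by move: sWw; rewrite in_setD1 => /andP[].
Qed.
End Exchange.

Theorem max_two_packing_weak_supports_no_strong_support :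
  max_two_packing e (weak_supports e) -> forall x, ~~ strong_support e x.
Proof.
move=> [pW maxW] x; apply/negP => sx.
set W := weak_supports e in pW maxW.
have xW : x \notin W := strong_support_notin_weak_supports sx.
have [l l_leaf xl] := strong_support_leaf sx.
have lx : e l x by rewrite e_sym.
have lW : l \notin W.
  exact: leaf_adj_notin_weak_supports l_leaf lx (strong_support_nonleaf sx).
have [w /andP[wW xw] | noW] := pickP [pred w | (w \in W) && e x w]; last first.
  have x_far_W w : w \in W -> ~~ e x w.
    by move=> wW; move: (noW w); rewrite /= wW => /negbT.
  have := maxW _ (two_packing_add_leaf pW xW l_leaf lx x_far_W).
  by rewrite cardsU1 lW ltnn.
have [u u_leaf wu] : exists2 u, leaf e u & e w u.
  by apply: weak_support_leaf; rewrite inE in wW.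
have uw : e u w by rewrite e_sym.
have uP : u \notin l |: (W :\ w).
  rewrite in_setU1 negb_or; apply/andP; split.
    apply: contraNneq xW => ul; rewrite ul in uw.
    by rewrite (leaf_adj_eq l_leaf lx uw).
  apply/negP; rewrite in_setD1 => /andP[nuw uW].
  have [nwu _] : far w u by apply: (two_packing_far pW wW uW); rewrite eq_sym.
  by rewrite wu in nwu.
have := maxW _ (two_packing_swap_leaves pW xW l_leaf lx lW wW xw u_leaf uw).
rewrite cardsU1 uP cardsU1 in_setD1 (negbTE lW) andbF (cardsD1 w W) wW /=.
by rewrite !add1n ltnn.
Qed.

End WeakSupportPacking.

Theorem claim1 (T : finType) (e : rel T) :
  is_tree e -> 6 <= #|T| -> max_two_packing e (weak_supports e) ->
  forall x : T, ~~ strong_support e x.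
Proof.
move=> [[e_sym _] _] _.
exact: max_two_packing_weak_supports_no_strong_support.
Qed.
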